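(* Let $M$ be a randomized mechanism with discrete output distributions and let $D_0,D_1$ be worst-case neighboring inputs for $M$. Write $A=M(D_0)$, $B=M(D_1)$. Let $n\ge1$ and $\varepsilon>0$, and define for distributions $P,Q\in\{A,B\}$: $$\beta_\infty^{P,Q}=\Pr_{o\sim P}\big[\mathcal L_{P/Q}(o)=\infty\big],\qquad \Gamma_\lambda(P\|Q)=\log\sum_{o:\ \Pr[P=o]\neq0,\ \Pr[Q=o]\neq0}\Pr[P=o]\Big(\frac{\Pr[P=o]}{\Pr[Q=o]}\Big)^{\lambda},$$ $$\delta^{MA}_{P,Q}(\varepsilon)=\min_{\lambda>0}\Big(1-\big[1-\beta_\infty^{P,Q}\big]^n+e^{\,n\Gamma_\lambda(P\|Q)-\lambda\varepsilon}\Big).$$ Then the mechanism consisting of $n$ independent invocations of $M$ on the same input is $(\varepsilon,\delta)$-ADP with $\delta=\max\big(\delta^{MA}_{A,B}(\varepsilon),\delta^{MA}_{B,A}(\varepsilon)\big)$.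
   Context: Privacy loss: for output distributions $P,Q$ and output $o$, $\mathcal L_{P/Q}(o)=\infty$ if $\Pr[P=o]\ne0$ and $\Pr[Q=o]=0$; $\mathcal L_{P/Q}(o)=\ln(\Pr[P=o]/\Pr[Q=o])$ if both are nonzero; $-\infty$ otherwise. For neighboring $D,D'$ let $c(o)=\mathcal L_{M(D)/M(D')}(o)$, $\beta_\infty(D,D')=\Pr_{o\sim M(D)}[c(o)=\infty]$ and $\alpha(\lambda;D,D')=\log\mathbb E_{o\sim M(D)}[e^{\lambda c(o)}\mid c(o)\ne\pm\infty]$. Neighboring inputs $D_0,D_1$ are worst-case for $M$ if there is $k\in\{0,1\}$ such that for all $\lambda>0$ and all neighboring $D,D'$: $\alpha(\lambda;D_k,D_{1-k})\ge\alpha(\lambda;D,D')$ and $\beta_\infty(D_k,D_{1-k})\ge\beta_\infty(D,D')$. A mechanism $N$ is $(\varepsilon,\delta)$-ADP if for all output sets $S$ and all neighboring $D,D'$: $\Pr[N(D)\in S]\le e^\varepsilon\Pr[N(D')\in S]+\delta$. *)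

From HB Require Import structures.
From mathcomp Require Import all_boot all_order all_algebra.
From mathcomp Require Import all_classical all_reals all_analysis.
Set Implicit Arguments. Unset Strict Implicit. Unset Printing Implicit Defensive.
Import Order.TTheory GRing.Theory Num.Theory.
Local Open Scope classical_set_scope.
Local Open Scope ring_scope.

Section DP.
Variables (R : realType) (O : choiceType).

(* A discrete output distribution on O, given by its probability mass
   function: Pr[P = o] = p o. *)
Definition is_pmf (p : O -> R) : Prop :=
  (forall o, 0 <= p o) /\ (\esum_(o in [set: O]) (p o)%:E = 1)%E.

Definition prob (p : O -> R) (S : set O) : \bar R := \esum_(o in S) (p o)%:E.

Definition ploss (P Q : O -> R) (o : O) : \bar R :=
  if P o != 0 then (if Q o != 0 then (ln (P o / Q o))%:E else +oo%E)
  else -oo%E.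

Definition beta_inf (P Q : O -> R) : \bar R :=
  prob P [set o | ploss P Q o = +oo%E].

Definition finite_loss (P Q : O -> R) : set O :=
  [set o | ploss P Q o \is a fin_num].

(* alpha(lambda) = log E_{o~P}[ e^{lambda c(o)} | c(o) <> +-oo ]
   (conditional expectation = E[X 1_E] / Pr[E]; extended-real conventions
    of MathComp-Analysis: x / 0 = x * +oo, log 0 = -oo). *)
Definition alpha (lam : R) (P Q : O -> R) : \bar R :=
  lne ((\esum_(o in finite_loss P Q) ((P o)%:E * expeR (lam%:E * ploss P Q o)))
       / prob P (finite_loss P Q))%E.

Definition Gamma (lam : R) (P Q : O -> R) : \bar R :=
  lne (\esum_(o in [set o | P o != 0 /\ Q o != 0])
         (P o * (P o / Q o) `^ lam)%:E).

(* delta^MA_{P,Q}(eps) for n-fold composition; the minimum over lambda > 0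
   is taken as an infimum in the extended reals. *)
Definition delta_MA (n : nat) (eps : R) (P Q : O -> R) : \bar R :=
  ereal_inf [set ((1 - (1 - fine (beta_inf P Q)) ^+ n)%:E
                  + expeR ((n%:R)%:E * Gamma lam P Q - (lam * eps)%:E))%E
            | lam in [set lam : R | 0 < lam]].

End DP.

Section Mech.
Variables (R : realType) (I : Type) (O : choiceType).

Definition worst_case (nb : I -> I -> Prop) (M : I -> O -> R) (D0 D1 : I) :=
  nb D0 D1 /\
  exists k : bool,
    let Dk := if k then D1 else D0 in
    let Dk' := if k then D0 else D1 in
    forall (lam : R), 0 < lam -> forall D D', nb D D' ->
      (alpha lam (M D) (M D') <= alpha lam (M Dk) (M Dk'))%E /\
      (beta_inf (M D) (M D') <= beta_inf (M Dk) (M Dk'))%E.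

Definition ADP (nb : I -> I -> Prop) (N : I -> O -> R) (eps : R)
  (delta : \bar R) : Prop :=
  forall (S : set O) (D D' : I), nb D D' ->
    (prob (N D) S <= (expR eps)%:E * prob (N D') S + delta)%E.

End Mech.

(* n independent invocations of M on the same input: outputs are
   n-tuples (finite functions 'I_n -> O) with product mass function *)
Definition nfold (R : realType) (I : Type) (O : choiceType) (M : I -> O -> R) (n : nat)
  : I -> {ffun 'I_n -> O} -> R :=
  fun D x => \prod_(i < n) M D (x i).
Arguments nfold {R I O} M n D x.

From HB Require Import structures.
From mathcomp Require Import all_boot all_order all_algebra.
From mathcomp Require Import all_classical all_reals all_analysis finmap.
From mathcomp Require Import lra.
Import Order.TTheory GRing.Theory Num.Theory.
Set Implicit Arguments. Unset Strict Implicit. Unset Printing Implicit Defensive.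
Local Open Scope classical_set_scope.
Local Open Scope ring_scope.

(* For a tuple x of outputs whose coordinates all have finite privacy loss,
   P(x) <= e^eps Q(x) + e^(-lam eps) P(x) (P(x)/Q(x))^lam  (a pointwise Chernoff
   bound).  Summing over a finite set of tuples, and using that tuples with an
   infinite-loss coordinate carry mass at most 1 - (1 - beta_inf)^n, bounds
   Pr[N(D) in S] by e^eps Pr[N(D') in S] + 1 - p^n + e^(-lam eps) (r p)^n, where
   p = 1 - beta_inf and r = exp alpha(lam).  The bound is nondecreasing in r and,
   unless the worst-case bound already exceeds 1, nonincreasing in p; so it is
   dominated by its value at the worst-case pair, where r p = exp Gamma_lam.
   Minimising over lam gives delta^MA. *)

Section RealInequalities.
Variable R : realType.

Lemma lerXn2r_ge0 (n : nat) (x y : R) : 0 <= x -> x <= y -> x ^+ n <= y ^+ n.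
Proof. by move=> x0 xy; rewrite lerXn2r ?nnegrE // (le_trans x0 xy). Qed.

Lemma chernoff_pointwise (eps lam y z : R) : 0 < lam -> 0 < y -> 0 < z ->
  y <= expR eps * z + expR (- (lam * eps)) * (y * (y / z) `^ lam).
Proof.
move=> lam0 y0 z0.
have [yle|ylt] := leP y (expR eps * z).
  by rewrite (le_trans yle) ?lerDl ?mulr_ge0 ?expR_ge0 ?powR_ge0 ?ltW.
suff y_le : y <= expR (- (lam * eps)) * (y * (y / z) `^ lam).
  by apply: le_trans y_le _; rewrite lerDr mulr_ge0 ?expR_ge0 ?ltW.
have ratio_ge : expR (lam * eps) <= (y / z) `^ lam.
  rewrite mulrC expRM ge0_ler_powR ?nnegrE ?expR_ge0 ?divr_ge0 ?ltW //.
  by rewrite ltr_pdivlMr.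
rewrite mulrCA -{1}[y]mulr1; apply: ler_wpM2l; first exact: ltW.
by rewrite expRN ler_pdivlMl ?expR_gt0 // mulr1.
Qed.

Lemma subrXX_addr_homo (n : nat) (d x y : R) : 0 <= d -> 0 <= x -> x <= y ->
  (x + d) ^+ n - x ^+ n <= (y + d) ^+ n - y ^+ n.
Proof.
move=> d0 x0 xy; have y0 := le_trans x0 xy.
rewrite !subrXX addrAC subrr add0r addrAC subrr add0r.
apply: ler_wpM2l => //; apply: ler_sum => i _.
by rewrite ler_pM ?exprn_ge0 ?addr_ge0 ?lerXn2r_ge0 ?lerD2r ?addr_ge0.
Qed.

Lemma subrXX_le_subr1X (n : nat) (q t p : R) :
  0 <= q -> q <= p -> q <= t -> t - q <= 1 - p -> t ^+ n - q ^+ n <= 1 - p ^+ n.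
Proof.
move=> q0 qp qt tq; have t0 := le_trans q0 qt.
have b0 : 0 <= 1 - p by rewrite (le_trans _ tq) ?subr_ge0.
apply: (@le_trans _ _ ((q + (1 - p)) ^+ n - q ^+ n)).
  by rewrite lerD2r lerXn2r_ge0 // -lerBlDl.
by have := subrXX_addr_homo n b0 q0 qp; rewrite subrKC expr1n.
Qed.

Lemma tail_bound_antitone (n : nat) (c r ps p : R) :
  c * r ^+ n <= 1 -> 0 <= ps -> ps <= p ->
  1 - p ^+ n + c * (r * p) ^+ n <= 1 - ps ^+ n + c * (r * ps) ^+ n.
Proof.
move=> cr1 ps0 psp; rewrite !exprMn !mulrA.
have : (1 - c * r ^+ n) * ps ^+ n <= (1 - c * r ^+ n) * p ^+ n.
  by rewrite ler_wpM2l ?subr_ge0 ?lerXn2r_ge0.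
rewrite !mulrBl !mul1r; lra.
Qed.

Lemma prod_powR (I : Type) (s : seq I) (f : I -> R) (r : R) :
  (forall i, 0 <= f i) ->
  \prod_(i <- s) f i `^ r = (\prod_(i <- s) f i) `^ r.
Proof.
move=> f0; elim: s => [|i s IH]; first by rewrite !big_nil powR1.
by rewrite !big_cons IH powRM ?prodr_ge0.
Qed.

Lemma expeR_mulrn_lne (n : nat) (s x : R) : (0 < n)%N -> 0 <= s ->
  expeR (n%:R%:E * lne s%:E - x%:E) = (expR (- x) * s ^+ n)%:E.
Proof.
move=> n0 s0; have [->|s_neq0] := eqVneq s 0.
  by rewrite le0_lneNy // gt0_muleNy ?lte_fin ?ltr0n //= expr0n gtn_eqF ?mulr0.
have s_gt0 : 0 < s by rewrite lt_neqAle eq_sym s_neq0.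
by rewrite lne_EFin //= expRD expRM_natl lnK ?posrE // mulrC.
Qed.

End RealInequalities.

Section PrivacyLoss.
Variables (R : realType) (O : choiceType).
Implicit Types (P Q : O -> R) (lam : R) (D : set O).

Lemma esum_ge_sum_fset (f : O -> R) D (A : {fset O}) : (forall o, 0 <= f o) ->
  ((\sum_(o <- A) (if o \in D then f o else 0))%:E <= \esum_(o in D) (f o)%:E)%E.
Proof.
move=> f0; rewrite esum_mkcond; apply: esum_ge; exists [set` A].
  by split => //; exact: finite_fset.
rewrite fsbig_finite ?finite_fset // set_fsetK -sumEFin.
by apply: lee_sum => o _; case: (o \in D).
Qed.

Lemma finite_lossE P Q o : finite_loss P Q o <-> P o != 0 /\ Q o != 0.
Proof.
rewrite /finite_loss /ploss /=.
by case: (P o != 0); case: (Q o != 0); split => //; case.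
Qed.

Lemma ploss_eqyE P Q o : ploss P Q o = +oo%E <-> P o != 0 /\ Q o = 0.
Proof.
rewrite /ploss; case: (P o =P 0) => [->|P_neq0]; first by split=> //; case.
by case: (Q o =P 0) => [->|Q_neq0]; split=> //; case.
Qed.

Definition fin_part P Q o := if o \in finite_loss P Q then P o else 0.
Definition inf_part P Q o := if o \in [set o | ploss P Q o = +oo%E] then P o else 0.

Definition renyi_part lam P Q o :=
  if o \in finite_loss P Q then P o * (P o / Q o) `^ lam else 0.

Lemma fin_part_ge0 P Q o : 0 <= P o -> 0 <= fin_part P Q o.
Proof. by rewrite /fin_part; case: ifP. Qed.

Lemma fin_part_le P Q o : 0 <= P o -> fin_part P Q o <= P o.
Proof. by rewrite /fin_part; case: ifP. Qed.

Lemma renyi_part_ge0 lam P Q o : 0 <= P o -> 0 <= renyi_part lam P Q o.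
Proof. by rewrite /renyi_part; case: ifP => // _ P0; rewrite mulr_ge0 ?powR_ge0. Qed.

Lemma fin_part_add_inf_part P Q o : fin_part P Q o + inf_part P Q o = P o.
Proof.
rewrite /fin_part /inf_part.
have [->|P_neq0] := eqVneq (P o) 0; first by case: ifP; case: ifP; rewrite ?addr0.
have [Q_eq0|Q_neq0] := eqVneq (Q o) 0.
  rewrite memNset ?mem_set ?add0r //=; first exact/ploss_eqyE.
  by case/finite_lossE => _; rewrite Q_eq0 eqxx.
rewrite mem_set ?memNset ?addr0 //=; last exact/finite_lossE.
by case/ploss_eqyE => _ /eqP; rewrite (negbTE Q_neq0).
Qed.

Lemma prob_finite_loss_add_beta_inf P Q : is_pmf P ->
  (prob P (finite_loss P Q) + beta_inf P Q = 1)%E.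
Proof.
case=> P0 <-; rewrite /beta_inf /prob !(esum_mkcond _ (fun o => (P o)%:E)).
rewrite -esumD; last 2 first.
- by move=> o _; case: ifP; rewrite ?lee_fin.
- by move=> o _; case: ifP; rewrite ?lee_fin.
apply: eq_esum => o _; rewrite -[in RHS](fin_part_add_inf_part P Q) EFinD.
by rewrite in_setT /fin_part /inf_part; case: ifP; case: ifP; rewrite ?adde0.
Qed.

Lemma pmf_split P Q : is_pmf P -> exists p,
  [/\ prob P (finite_loss P Q) = p%:E, beta_inf P Q = (1 - p)%:E & 0 <= p].
Proof.
move=> pmfP; have := prob_finite_loss_add_beta_inf Q pmfP.
have : (0 <= prob P (finite_loss P Q))%E.
  by apply: esum_ge0 => o _; rewrite lee_fin pmfP.1.
have : (0 <= beta_inf P Q)%E by apply: esum_ge0 => o _; rewrite lee_fin pmfP.1.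
case: (beta_inf P Q) => [b| |]; case: (prob P _) => [p| |] //= _ p0.
move=> /eqP; rewrite -EFinD eqe => /eqP pb.
by exists p; split => //; congr EFin; lra.
Qed.

Definition renyi_sum lam P Q : \bar R :=
  \esum_(o in finite_loss P Q) (P o * (P o / Q o) `^ lam)%:E.

Lemma renyi_sum_ge0 lam P Q : (forall o, 0 <= P o) -> (0 <= renyi_sum lam P Q)%E.
Proof. by move=> P0; apply: esum_ge0 => o _; rewrite lee_fin mulr_ge0 ?powR_ge0. Qed.

Lemma Gamma_renyi_sum lam P Q : Gamma lam P Q = lne (renyi_sum lam P Q).
Proof. by congr (lne (esum _ _)); apply/seteqP; split => o /= /finite_lossE. Qed.

Lemma alpha_renyi_sum lam P Q :
  alpha lam P Q = lne (renyi_sum lam P Q / prob P (finite_loss P Q))%E.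
Proof.
congr (lne (_ / _))%E; apply: eq_esum => o /[dup] /finite_lossE [P_neq0 Q_neq0].
rewrite /ploss P_neq0 Q_neq0 /= /powR mulf_eq0 invr_eq0.
by rewrite (negbTE P_neq0) (negbTE Q_neq0).
Qed.

Lemma renyi_sum_le_of_alpha lam P Q Ps Qs (p ps r : R) :
  (forall o, 0 <= P o) -> 0 < p -> 0 < ps -> 0 <= r ->
  prob P (finite_loss P Q) = p%:E -> prob Ps (finite_loss Ps Qs) = ps%:E ->
  renyi_sum lam Ps Qs = (r * ps)%:E ->
  (alpha lam P Q <= alpha lam Ps Qs)%E -> (renyi_sum lam P Q <= (r * p)%:E)%E.
Proof.
move=> P0 p0 ps0 r0 Ep Eps Ess.
rewrite !alpha_renyi_sum Ep Eps Ess !inver !gt_eqF //.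
rewrite -EFinM mulfK ?gt_eqF //.
case: (renyi_sum lam P Q) (renyi_sum_ge0 lam Q P0) => [s| |] // s0; last first.
  by rewrite gt0_mulye ?lte_fin ?invr_gt0 //= leye_eq; case: ifP.
rewrite lee_fin in s0.
rewrite -EFinM lee_lne ?in_itv /= ?leey ?lee_fin ?divr_ge0 ?(ltW p0) ?r0 //.
by rewrite ler_pdivrMr.
Qed.

End PrivacyLoss.

Section TupleSums.
Local Open Scope fset_scope.
Variables (R : realType) (O : choiceType) (n : nat).
Implicit Types (Xs : {fset {ffun 'I_n -> O}}) (A : {fset O}).

Definition coords Xs : {fset O} :=
  seq_fset tt (flatten [seq [seq x i | i <- enum 'I_n] | x : {ffun 'I_n -> O} <- Xs]).

Lemma coords_mem Xs x i : x \in Xs -> x i \in coords Xs.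
Proof.
move=> xXs; rewrite seq_fsetE; apply/flatten_mapP; exists x => //.
by rewrite map_f ?mem_enum.
Qed.

Definition ffun_val {A} (f : {ffun 'I_n -> A}) : {ffun 'I_n -> O} :=
  [ffun i => val (f i)].

Definition ffun_coords Xs (x : Xs) : {ffun 'I_n -> coords Xs} :=
  [ffun i => [` coords_mem i (fsvalP x)]].

Lemma ffun_coordsK Xs (x : Xs) : ffun_val (ffun_coords x) = val x.
Proof. by apply/ffunP => i; rewrite !ffunE. Qed.

Lemma sum_fset_le_sum_ffun Xs (G : {ffun 'I_n -> O} -> R) : (forall x, 0 <= G x) ->
  \sum_(x <- Xs) G x <= \sum_(f : {ffun 'I_n -> coords Xs}) G (ffun_val f).
Proof.
move=> G0; rewrite big_seq_fsetE /=.
under eq_bigr => x _ do rewrite -ffun_coordsK.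
have coords_inj : {in predT &, injective (@ffun_coords Xs)}.
  by move=> x y _ _ /(congr1 ffun_val); rewrite !ffun_coordsK => /val_inj.
rewrite -(big_imset (fun f => G (ffun_val f)) coords_inj) /=.
by rewrite [leRHS](bigID [in @ffun_coords Xs @: predT]) /= lerDl sumr_ge0.
Qed.

Lemma sum_ffun_prod A (h : O -> R) :
  \sum_(f : {ffun 'I_n -> A}) \prod_(i < n) h (ffun_val f i) = (\sum_(o <- A) h o) ^+ n.
Proof.
under eq_bigr => f _ do under eq_bigr => i _ do rewrite ffunE.
rewrite -(bigA_distr_bigA (fun (i : 'I_n) (a : A) => h (val a))) /=.
by rewrite prodr_const card_ord big_seq_fsetE.
Qed.

Lemma sum_prod_le Xs (G : O -> R) : (forall o, 0 <= G o) ->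
  \sum_(x <- Xs) \prod_(i < n) G (x i) <= (\sum_(o <- coords Xs) G o) ^+ n.
Proof.
move=> G0; rewrite -sum_ffun_prod.
apply: (sum_fset_le_sum_ffun Xs (G := fun x => \prod_(i < n) G (x i))) => x.
by rewrite prodr_ge0.
Qed.

Lemma sum_prod_subr_le Xs (G H : O -> R) : (forall o, 0 <= H o <= G o) ->
  \sum_(x <- Xs) (\prod_(i < n) G (x i) - \prod_(i < n) H (x i)) <=
  (\sum_(o <- coords Xs) G o) ^+ n - (\sum_(o <- coords Xs) H o) ^+ n.
Proof.
move=> HG; rewrite -!sum_ffun_prod -sumrB.
apply: (sum_fset_le_sum_ffun Xs
  (G := fun x => \prod_(i < n) G (x i) - \prod_(i < n) H (x i))) => x.
by rewrite subr_ge0 ler_prod.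
Qed.

End TupleSums.

Section NfoldTail.
Variables (R : realType) (O : choiceType) (n : nat) (P Q : O -> R).
Hypotheses (pmfP : is_pmf P) (Q0 : forall o, 0 <= Q o).

Lemma prod_le_chernoff (lam eps : R) (x : {ffun 'I_n -> O}) : 0 < lam ->
  \prod_(i < n) P (x i) <= expR eps * \prod_(i < n) Q (x i)
    + (\prod_(i < n) P (x i) - \prod_(i < n) fin_part P Q (x i))
    + expR (- (lam * eps)) * \prod_(i < n) renyi_part lam P Q (x i).
Proof.
move=> lam0; have P0 := pmfP.1.
have Qx0 : 0 <= expR eps * \prod_(i < n) Q (x i).
  by rewrite mulr_ge0 ?expR_ge0 ?prodr_ge0.
have [all_fin|/existsNP[j j_inf]] := pselect (forall i, finite_loss P Q (x i)).
  have PQ_neq0 i : P (x i) != 0 /\ Q (x i) != 0 by apply/finite_lossE.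
  rewrite [\prod_(i < n) fin_part _ _ _](eq_bigr (P \o x)) => [|i _]; last first.
    by rewrite /fin_part mem_set.
  rewrite subrr addr0 [\prod_(i < n) renyi_part _ _ _ _](eq_bigr
    (fun i => P (x i) * (P (x i) / Q (x i)) `^ lam)).
    rewrite big_split /= prod_powR ?prodf_div => [|i]; last by rewrite divr_ge0.
    apply: chernoff_pointwise => //; apply: prodr_gt0 => i _.
      by rewrite lt_neqAle eq_sym (PQ_neq0 i).1 P0.
    by rewrite lt_neqAle eq_sym (PQ_neq0 i).2 Q0.
  by move=> i _; rewrite /renyi_part mem_set.
rewrite [\prod_(i < n) fin_part _ _ _](bigD1 j) //= {1}/fin_part memNset //.
rewrite mul0r subr0.
have : 0 <= expR (- (lam * eps)) * \prod_(i < n) renyi_part lam P Q (x i).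
  by rewrite mulr_ge0 ?expR_ge0 ?prodr_ge0 // => i _; rewrite renyi_part_ge0.
lra.
Qed.

Lemma sum_prod_le_tail (Xs : {fset {ffun 'I_n -> O}}) (lam eps p r : R) :
  0 < lam -> prob P (finite_loss P Q) = p%:E -> beta_inf P Q = (1 - p)%:E ->
  0 <= r -> (renyi_sum lam P Q <= (r * p)%:E)%E ->
  \sum_(x <- Xs) \prod_(i < n) P (x i) <=
    expR eps * \sum_(x <- Xs) \prod_(i < n) Q (x i)
    + (1 - p ^+ n + expR (- (lam * eps)) * (r * p) ^+ n).
Proof.
move=> lam0 Ep Eb r0 renyi_le; have P0 := pmfP.1.
apply: le_trans (ler_sum _ (fun x _ => prod_le_chernoff eps x lam0)) _.
rewrite 2!big_split /= -!mulr_sumr addrA; apply: lerD; first apply: lerD => //.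
  apply: le_trans (sum_prod_subr_le Xs (G := P) (H := fin_part P Q) _) _.
    by move=> o; rewrite fin_part_ge0 ?fin_part_le.
  apply: subrXX_le_subr1X; first by rewrite sumr_ge0 // => o _; rewrite fin_part_ge0.
  - have := esum_ge_sum_fset (finite_loss P Q) (coords Xs) P0.
    by rewrite -/(prob _ _) Ep.
  - by rewrite ler_sum // => o _; rewrite fin_part_le.
  rewrite -sumrB.
  under eq_bigr => o _ do rewrite -{1}(fin_part_add_inf_part P Q o) addrC addKr.
  have := esum_ge_sum_fset [set o | ploss P Q o = +oo%E] (coords Xs) P0.
  by rewrite -/(prob _ _) -/(beta_inf _ _) Eb.
rewrite ler_wpM2l ?expR_ge0 //.
apply: le_trans (sum_prod_le Xs (G := renyi_part lam P Q) _) _.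
  by move=> o; rewrite renyi_part_ge0.
apply: lerXn2r_ge0; first by rewrite sumr_ge0 // => o _; rewrite renyi_part_ge0.
rewrite -lee_fin; apply: le_trans renyi_le.
by apply: (esum_ge_sum_fset (f := fun o => P o * (P o / Q o) `^ lam)) => o;
  rewrite mulr_ge0 ?powR_ge0.
Qed.

Lemma sum_prod_le1 (Xs : {fset {ffun 'I_n -> O}}) :
  \sum_(x <- Xs) \prod_(i < n) P (x i) <= 1.
Proof.
apply: le_trans (sum_prod_le Xs pmfP.1) _.
have := esum_ge_sum_fset setT (coords Xs) pmfP.1.
under eq_bigr do rewrite in_setT.
rewrite pmfP.2 lee_fin => sum_le1.
by rewrite exprn_ile1 ?sumr_ge0 // => o _; apply: pmfP.1.
Qed.

Lemma sum_prod_le_delta_term (Ps Qs : O -> R) (Xs : {fset {ffun 'I_n -> O}})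
    (lam eps : R) :
  (0 < n)%N -> is_pmf Ps -> 0 < lam ->
  (alpha lam P Q <= alpha lam Ps Qs)%E -> (beta_inf P Q <= beta_inf Ps Qs)%E ->
  ((\sum_(x <- Xs) \prod_(i < n) P (x i))%:E <=
    (expR eps * \sum_(x <- Xs) \prod_(i < n) Q (x i))%:E
    + ((1 - (1 - fine (beta_inf Ps Qs)) ^+ n)%:E
       + expeR (n%:R%:E * Gamma lam Ps Qs - (lam * eps)%:E)))%E.
Proof.
move=> n0 pmfPs lam0 alpha_le beta_le.
have [p [Ep Eb _]] := pmf_split Q pmfP.
have [ps [Eps Ebs ps0]] := pmf_split Qs pmfPs.
have sumQ0 : 0 <= expR eps * \sum_(x <- Xs) \prod_(i < n) Q (x i).
  by rewrite mulr_ge0 ?expR_ge0 ?sumr_ge0 // => x _; rewrite prodr_ge0.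
rewrite Gamma_renyi_sum Ebs /= subKr.
case Ess: (renyi_sum lam Ps Qs) (renyi_sum_ge0 lam Qs pmfPs.1) => [ss| |] // ss0.
  2: by rewrite /= gt0_muley ?lte_fin ?ltr0n //= leey.
rewrite lee_fin in ss0; rewrite expeR_mulrn_lne // -!EFinD lee_fin.
set c := expR (- (lam * eps)).
have [tail_ge1|c_ss_lt] := leP (ps ^+ n) (c * ss ^+ n).
  by have := sum_prod_le1 Xs; lra.
have ps_gt0 : 0 < ps.
  rewrite lt_neqAle ps0 andbT; apply: contraTneq c_ss_lt => <-.
  by rewrite expr0n gtn_eqF // -leNgt mulr_ge0 ?expR_ge0 ?exprn_ge0.
have ps_le_p : ps <= p by move: beta_le; rewrite Eb Ebs lee_fin; lra.
have [r r0 ss_r] : exists2 r, 0 <= r & ss = r * ps.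
  by exists (ss / ps); rewrite ?divr_ge0 ?divfK ?gt_eqF.
rewrite ss_r in Ess c_ss_lt *.
have cr1 : c * r ^+ n <= 1.
  rewrite -(ler_pM2r (exprn_gt0 n ps_gt0)) mul1r -mulrA -exprMn; exact: ltW.
have p_gt0 := lt_le_trans ps_gt0 ps_le_p.
have := renyi_sum_le_of_alpha pmfP.1 p_gt0 ps_gt0 r0 Ep Eps Ess alpha_le.
move=> /(sum_prod_le_tail Xs eps lam0 Ep Eb r0) /le_trans; apply.
by rewrite lerD2l tail_bound_antitone.
Qed.

Lemma prob_prod_le_delta_MA (Ps Qs : O -> R) (eps : R) (S : set {ffun 'I_n -> O}) :
  (0 < n)%N -> is_pmf Ps ->
  (forall lam, 0 < lam ->
    (alpha lam P Q <= alpha lam Ps Qs)%E /\ (beta_inf P Q <= beta_inf Ps Qs)%E) ->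
  (prob (fun x : {ffun 'I_n -> O} => \prod_(i < n) P (x i))%R S <=
    (expR eps)%:E * prob (fun x : {ffun 'I_n -> O} => \prod_(i < n) Q (x i))%R S
    + delta_MA n eps Ps Qs)%E.
Proof.
move=> n0 pmfPs dominated; rewrite /prob {1}/esum.
apply: ge_ereal_sup => _ [X [finX XS]] <-; rewrite fsbig_finite // sumEFin.
apply: (@le_trans _ _ ((expR eps * \sum_(x <- fset_set X) \prod_(i < n) Q (x i))%:E
                       + delta_MA n eps Ps Qs)%E).
  rewrite addeC -leeBlDr // -EFinB; apply/ereal_infP => _ [lam lam0 <-].
  rewrite EFinB leeBlDr // addeC.
  have [alpha_le beta_le] := dominated lam lam0.
  exact: sum_prod_le_delta_term.
rewrite leeD2r // EFinM lee_wpmul2l ?lee_fin ?expR_ge0 //.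
by apply: esum_ge; exists X => //; rewrite fsbig_finite // sumEFin.
Qed.

End NfoldTail.

Theorem proposition1 (R : realType) (I : Type) (O : choiceType) (nb : I -> I -> Prop)
  (M : I -> O -> R) (D0 D1 : I) (n : nat) (eps : R) :
  (forall D, is_pmf (M D)) ->
  worst_case nb M D0 D1 ->
  (1 <= n)%N -> 0 < eps ->
  ADP nb (nfold M n) eps
    (maxe (delta_MA n eps (M D0) (M D1)) (delta_MA n eps (M D1) (M D0))).
Proof.
move=> pmfM [_ [k worst]] n_gt0 _ S D D' nbDD'.
have delta_le_max :
    (delta_MA n eps (M (if k then D1 else D0)) (M (if k then D0 else D1)) <=
     maxe (delta_MA n eps (M D0) (M D1)) (delta_MA n eps (M D1) (M D0)))%E.
  by case: k {worst}; rewrite le_max lexx ?orbT.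
apply: le_trans (leeD2l _ delta_le_max).
apply: prob_prod_le_delta_MA => //; first exact: (pmfM D').1.
by move=> lam lam0; exact: worst.
Qed.
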